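(* Let $H$ be a balanced graph and let $d \in \mathbb{N}$. If $F \subsetneq H_d$ is a proper subgraph of $H_d$ whose vertex set contains both endpoints of the root of $H_d$, then $e(F) \leqslant \big(v(F) - 2\big)\lambda(H)$.
   Context: $H$ is a graph with $v(H) \geqslant 4$; it is balanced if $e(H) \geqslant 2v(H)-2$ and $\frac{e(F)-1}{v(F)-2} \leqslant \lambda(H) := \frac{e(H)-2}{v(H)-2}$ for every proper subgraph $F \subsetneq H$ with $v(F) \geqslant 3$. The graph $H_d$: choose a sequence of edges $(e_1, e_2, \ldots)$ of $H$ such that $e_j$ and $e_{j+1}$ share no endpoint for every $j$. Take copies $H^{(1)}, \ldots, H^{(d)}$ of $H$ and, for each $1 \leqslant j \leqslant d-1$, identify the endpoints of $e_{j+1}$ in $H^{(j)}$ with the endpoints of $e_{j+1}$ in $H^{(j+1)}$. Then remove $e_1$ from $H^{(1)}$ and, for each $1 \leqslant j \leqslant d-1$, remove the shared edge $e_{j+1}$ of $H^{(j)} \cap H^{(j+1)}$. The root of $H_d$ is the pair of endpoints of $e_1$ in $H^{(1)}$. (Any such choice of edge sequence is allowed.) *)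

From HB Require Import structures.
From mathcomp Require Import all_boot all_order all_algebra.
Set Implicit Arguments. Unset Strict Implicit. Unset Printing Implicit Defensive.
Import Order.TTheory GRing.Theory Num.Theory.
Local Open Scope ring_scope.

Definition simple_graph (T : finType) (VG : {set T}) (EG : {set {set T}}) : Prop :=
  forall e, e \in EG -> #|e| = 2%N /\ e \subset VG.

Definition is_subgraph (T : finType) (VG : {set T}) (EG : {set {set T}})
  (VF : {set T}) (EF : {set {set T}}) : Prop :=
  VF \subset VG /\ EF \subset EG /\ (forall e, e \in EF -> e \subset VF).

Definition lambdaH (V : finType) (E : {set {set V}}) : rat :=
  ((#|E|%:R - 2) / (#|V|%:R - 2)).

Definition balanced (V : finType) (E : {set {set V}}) : Prop :=
  (#|E| >= 2 * #|V| - 2)%N /\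
  forall (VF : {set V}) (EF : {set {set V}}),
    is_subgraph [set: V] E VF EF -> (VF, EF) <> ([set: V], E) ->
    (3 <= #|VF|)%N ->
    (#|EF|%:R - 1) / (#|VF|%:R - 2) <= lambdaH E.

(* Copies are indexed 0..d-1 (copy k is H^(k+1));
   es k is the edge e_(k+1) of the paper (es 0 = e_1 is the root edge).
   Vertices of H_d are represented by pairs (k, x) : 'I_d * V, where the
   endpoint x of e_(k+1) = es k in copy k (k >= 1) is identified with
   (k-1, x); [rep k x] is the canonical representative. *)

Definition ord_pred_of (d : nat) (k : 'I_d) : 'I_d :=
  Ordinal (leq_ltn_trans (leq_pred k) (ltn_ord k)).

Definition rep (V : finType) (d : nat) (es : nat -> {set V}) (k : 'I_d) (x : V)
  : 'I_d * V :=
  if (0 < k)%N && (x \in es (nat_of_ord k)) then (ord_pred_of k, x) else (k, x).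

(* Edge e of copy k is deleted: it is e_1 in copy 0, or it is the shared
   edge e_(k+1) with copy k-1, or the shared edge e_(k+2) with copy k+1. *)
Definition removed (V : finType) (d : nat) (es : nat -> {set V}) (k : 'I_d)
  (e : {set V}) : bool :=
  (e == es (nat_of_ord k)) || ((k.+1 < d)%N && (e == es k.+1)).

Definition Hd_V (V : finType) (d : nat) (es : nat -> {set V}) : {set 'I_d * V} :=
  [set rep es p.1 p.2 | p : 'I_d * V].

Definition Hd_E (V : finType) (E : {set {set V}}) (d : nat) (es : nat -> {set V})
  : {set {set 'I_d * V}} :=
  [set [set rep es p.1 x | x in (p.2 : {set V})] |
     p in [set p : 'I_d * {set V} | (p.2 \in E) && ~~ removed es p.1 p.2]].

(* Cut F along the copies of H: on copy k it leaves a trace with n_k vertices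
   and m_k edges, and consecutive traces share the L_k <= 2 ends of e_(k+1)
   that lie in F, so v(F) >= sum_k n_k - sum_(k>0) L_k.  Balancedness of H
   bounds m_k by (n_k - L_k) lambda, except that a copy lying entirely in F
   may exceed this by one edge; the excess is recorded by a potential that
   telescopes along the chain of copies and survives only when F is all of
   H_d.  As F contains both root vertices, L_0 = 2 and summing over the copies
   gives e(F) <= (v(F) - 2) lambda. *)

From HB Require Import structures.
From mathcomp Require Import all_boot all_order all_algebra.
From mathcomp Require Import lra zify.
Set Implicit Arguments. Unset Strict Implicit. Unset Printing Implicit Defensive.
Import Order.TTheory GRing.Theory Num.Theory.
Local Open Scope ring_scope.

Lemma sum_card_fibers (I T : finType) (A : {set I * T}) :
  (\sum_(i : I) #|[set x | (i, x) \in A]| = #|A|)%N.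
Proof.
rewrite (eq_bigr (fun i => \sum_(x in [set x | (i, x) \in A]) 1)%N); last first.
  by move=> i _; rewrite sum1_card.
rewrite (pair_big_dep xpredT (fun i x => x \in [set x | (i, x) \in A]) (fun _ _ => 1%N)) /=.
by rewrite -sum1_card; apply: eq_bigl => -[i x] /=; rewrite inE.
Qed.

Lemma ler_sum_telescope (R : numDomainType) (x y c : nat -> R) (d : nat) :
  (forall k, (k < d)%N -> x k <= y k + (c k - c k.+1)) ->
  \sum_(0 <= k < d) x k <= \sum_(0 <= k < d) y k + (c 0%N - c d).
Proof.
move=> hxy; rewrite -opprB -telescope_sumr // -sumrN -big_split /=.
by apply: ler_sum_nat => k /andP [_ /hxy]; rewrite opprB.
Qed.

Section BalancedGraph.

Variables (V : finType) (E : {set {set V}}).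
Hypothesis edge_card2 : forall e, e \in E -> #|e| = 2%N.
Hypothesis V_gt2 : (2 < #|V|)%N.
Hypothesis E_balanced : balanced E.

Let lam := lambdaH E.

Let V_sub2_gt0 : 0 < #|V|%:R - 2 :> rat.
Proof.
have : 3%:R <= #|V|%:R :> rat by rewrite ler_nat.
lra.
Qed.

Lemma lambdaH_ge2 : 2 <= lam.
Proof.
rewrite /lam /lambdaH ler_pdivlMr //.
have [hE _] := E_balanced.
have : (2 * #|V|)%:R <= (#|E| + 2)%:R :> rat by rewrite ler_nat; lia.
rewrite natrM natrD; lra.
Qed.

Lemma card_E_lambdaH : #|E|%:R = (#|V|%:R - 2) * lam + 2.
Proof. by rewrite /lam /lambdaH mulrC divfK ?subrK // gt_eqF. Qed.

Lemma balanced_proper_subgraph_le (W : {set V}) (Y : {set {set V}}) :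
  is_subgraph [set: V] E W Y -> (W, Y) <> ([set: V], E) -> (2 <= #|W|)%N ->
  #|Y|%:R <= (#|W|%:R - 2) * lam + 1.
Proof.
move=> hsub hproper; rewrite leq_eqVlt => /orP [/eqP hW2 | hW3].
  have : Y \subset [set W].
    apply/subsetP => e he; have [_ [/subsetP hYE hYW]] := hsub.
    by rewrite inE eqEcard hYW // (edge_card2 (hYE e he)) -hW2.
  by move/subset_leq_card; rewrite cards1 -hW2 subrr mul0r add0r -(ler_nat rat).
have hW3' : 0 < #|W|%:R - 2 :> rat.
  have : 3%:R <= #|W|%:R :> rat by rewrite ler_nat.
  lra.
have := E_balanced.2 _ _ hsub hproper hW3.
by rewrite ler_pdivrMr // -/lam; lra.
Qed.

End BalancedGraph.

Section CopiesOfH.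

Variables (V : finType) (E : {set {set V}}) (es : nat -> {set V}) (d : nat).
Hypothesis edge_card2 : forall e, e \in E -> #|e| = 2%N.
Hypothesis es_in_E : forall j, es j \in E.
Hypothesis es_disjoint : forall j, [disjoint es j & es j.+1].
Hypothesis d_gt0 : (0 < d)%N.
Variables (VF : {set 'I_d * V}) (EF : {set {set 'I_d * V}}).
Hypothesis F_sub : is_subgraph (Hd_V d es) (Hd_E E d es) VF EF.

Let card_es j : #|es j| = 2%N := edge_card2 (es_in_E j).

(* Copy [k] of H, for [k < d]; out of range it is junk (copy 0). *)
Definition copy (k : nat) : 'I_d := insubd (Ordinal d_gt0) k.

Definition trace (k : nat) : {set V} := [set x | rep es (copy k) x \in VF].

Definition copy_edge (k : nat) (e : {set V}) : {set 'I_d * V} :=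
  [set rep es (copy k) x | x in e].

Definition copy_edges (k : nat) : {set {set V}} :=
  [set e in E | ~~ removed es (copy k) e].

Definition trace_edges (k : nat) : {set {set V}} :=
  [set e in copy_edges k | copy_edge k e \in EF].

Definition shared (k : nat) : nat := #|es k :&: trace k|.

Definition full_copy (k : nat) : bool :=
  (trace k == [set: V]) && (trace_edges k == copy_edges k).

Lemma copy_val k : (k < d)%N -> copy k = k :> nat.
Proof. by move=> hk; rewrite /copy val_insubd hk. Qed.

Lemma copy_ord (i : 'I_d) : copy i = i.
Proof. exact: valKd. Qed.

Lemma rep_copy k x : (k < d)%N -> (k == 0%N) || (x \notin es k) ->
  rep es (copy k) x = (copy k, x).
Proof.
move=> hk hx; rewrite /rep copy_val //.
by case: k hk hx => [|k] //= _ /negbTE ->.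
Qed.

Lemma rep_copyS k x : (k.+1 < d)%N -> x \in es k.+1 ->
  rep es (copy k.+1) x = (copy k, x).
Proof.
move=> hk hx; rewrite /rep copy_val //= hx /=; congr pair.
by apply: val_inj; rewrite /= !copy_val //; lia.
Qed.

Lemma removed_copy k e : (k < d)%N ->
  removed es (copy k) e = (e == es k) || ((k.+1 < d)%N && (e == es k.+1)).
Proof. by move=> hk; rewrite /removed copy_val. Qed.

Lemma es_neqS k : es k != es k.+1.
Proof.
apply/eqP => h; have /card_gt0P [x hx] : (0 < #|es k.+1|)%N by rewrite card_es.
by have := disjointFl (es_disjoint k) hx; rewrite h hx.
Qed.

Lemma card_es_setI_eq2 k (A : {set V}) : (#|es k :&: A| == 2%N) = (es k \subset A).
Proof.
rewrite -(card_es k); apply/eqP/idP => [h | /setIidPl -> //].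
by apply/setIidPl/eqP; rewrite eqEcard subsetIl /= h.
Qed.

Lemma trace_edges_sub k e : e \in trace_edges k -> e \subset trace k.
Proof.
rewrite inE => /andP [_ he]; apply/subsetP => x hx; rewrite inE.
by have [_ [_ /(_ _ he) /subsetP]] := F_sub; apply; apply: imset_f.
Qed.

Lemma shared_traceS k : (k.+1 < d)%N -> es k.+1 :&: trace k.+1 = es k.+1 :&: trace k.
Proof.
move=> hk; apply/setP => x; rewrite !inE.
case hx: (x \in es k.+1) => //=.
by rewrite rep_copyS // rep_copy ?(disjointFl (es_disjoint k) hx) ?orbT //; lia.
Qed.

Lemma card_copy_edges k : (k < d)%N -> (#|copy_edges k| + 1 + (k.+1 < d))%N = #|E|.
Proof.
move=> hk; rewrite -addnA -(cardsID [set e | removed es (copy k) e] E) addnC.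
have -> : E :\: [set e | removed es (copy k) e] = copy_edges k.
  by apply/setP => e; rewrite !inE andbC.
congr (_ + _)%N.
case hk1 : (k.+1 < d)%N.
  have -> : E :&: [set e | removed es (copy k) e] = [set es k; es k.+1].
    apply/setP => e; rewrite !inE removed_copy // hk1 /=.
    by case: eqP => [->|_]; case: eqP => [->|_]; rewrite ?es_in_E ?andbF.
  by rewrite cards2 es_neqS.
have -> : E :&: [set e | removed es (copy k) e] = [set es k].
  apply/setP => e; rewrite !inE removed_copy // hk1 /= orbF.
  by case: eqP => [->|_]; rewrite ?es_in_E ?andbF.
by rewrite cards1.
Qed.

Hypothesis V_gt2 : (2 < #|V|)%N.
Hypothesis E_balanced : balanced E.

Let lam := lambdaH E.

Lemma full_copy_card k : (k < d)%N -> full_copy k ->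
  [/\ shared k = 2%N, (k.+1 < d)%N -> shared k.+1 = 2%N &
      (#|trace_edges k| + 1 + (k.+1 < d)%N)%:R = (#|trace k|%:R - 2) * lam + 2 :> rat].
Proof.
move=> hk /andP [/eqP hW /eqP hM]; split.
- by apply/eqP; rewrite card_es_setI_eq2 hW subsetT.
- by move=> hk1; rewrite /shared shared_traceS // hW setIT card_es.
- by rewrite hM card_copy_edges // (card_E_lambdaH E V_gt2) hW cardsT.
Qed.

Lemma nonfull_copy_card k : (k < d)%N -> ~~ full_copy k -> (2 <= #|trace k|)%N ->
  (#|trace_edges k| + (es k \subset trace k)
     + ((k.+1 < d)%N && (es k.+1 \subset trace k)))%:R
    <= (#|trace k|%:R - 2) * lam + 1 :> rat.
Proof.
move=> hk hnfull hW2.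
pose inner := [set e in E | removed es (copy k) e & e \subset trace k].
have inner_es j : removed es (copy k) (es j) -> es j \subset trace k -> es j \in inner.
  by move=> h1 h2; rewrite !inE es_in_E h1 h2.
have card_inner : ((es k \subset trace k) + ((k.+1 < d) && (es k.+1 \subset trace k))
                    <= #|inner|)%N.
  have hr0 : removed es (copy k) (es k) by rewrite removed_copy // eqxx.
  have hr1 : (k.+1 < d)%N -> removed es (copy k) (es k.+1).
    by move=> h; rewrite removed_copy // h eqxx orbT.
  case: (boolP (es k \subset trace k)) => h0;
    case: (boolP (_ && _)) => [/andP [hk1 h1]|_] //=.
  - have : [set es k; es k.+1] \subset inner.
      by apply/subsetP => e; rewrite in_set2 => /orP [] /eqP ->; apply: inner_es => //; apply: hr1.
    by move/subset_leq_card; rewrite cards2 es_neqS.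
  - by apply/card_gt0P; exists (es k); apply: inner_es.
  - by apply/card_gt0P; exists (es k.+1); apply: inner_es => //; apply: hr1.
pose Y := trace_edges k :|: inner.
have card_Y : #|Y| = (#|trace_edges k| + #|inner|)%N.
  rewrite /Y cardsU; have -> : trace_edges k :&: inner = set0.
    by apply/setP => e; rewrite !inE; case: (removed _ _ _); rewrite ?andbF.
  by rewrite cards0 subn0.
have Y_sub e : e \in Y -> e \in E /\ e \subset trace k.
  rewrite inE => /orP [he | ]; last by rewrite inE => /and3P [].
  by split; [move: he; rewrite !inE => /andP [/andP []] | exact: trace_edges_sub].
have Y_subgraph : is_subgraph [set: V] E (trace k) Y.
  by split; [exact: subsetT | split; [apply/subsetP => e /Y_sub [] | move=> e /Y_sub []]].
have Y_proper : (trace k, Y) <> ([set: V], E).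
  case=> hW hY; move/negP: hnfull; apply; rewrite /full_copy hW eqxx /=.
  apply/eqP/setP => e; apply/idP/idP; first by rewrite inE => /andP [].
  move=> he; move: (he); rewrite inE => /andP [heE hnr].
  have : e \in Y by rewrite hY.
  by rewrite inE => /orP [//|]; rewrite inE (negbTE hnr) andbF.
apply: le_trans (balanced_proper_subgraph_le edge_card2 E_balanced Y_subgraph Y_proper hW2).
by rewrite card_Y ler_nat -addnA leq_add2l.
Qed.

Definition full_from (k : nat) : bool := \big[andb/true]_(k <= j < d) full_copy j.

Definition potential (k : nat) : bool := [&& (k < d)%N, shared k == 2%N & full_from k].

Lemma trace_edges_le k : (k < d)%N ->
  #|trace_edges k|%:R
    <= (#|trace k|%:R - (shared k)%:R) * lam + ((potential k)%:R - (potential k.+1)%:R) :> rat.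
Proof.
move=> hk; have lam_ge2 : 2 <= lam := lambdaH_ge2 V_gt2 E_balanced.
have full_fromS : full_from k = full_copy k && full_from k.+1 := big_ltn hk.
rewrite /potential hk full_fromS /=.
case: (boolP (full_copy k)) => hfull.
  have [-> hL1 hm] := full_copy_card hk hfull; rewrite eqxx /=.
  case hk1 : (k.+1 < d)%N; rewrite hk1 in hm.
    by rewrite hL1 // eqxx /=; move: hm; rewrite !natrD; case: (full_from _) => /=; lra.
  have -> : full_from k.+1 by rewrite /full_from big_geq //; lia.
  by move: hm; rewrite !natrD /=; lra.
rewrite andbF /=.
pose t := (k.+1 < d)%N && (es k.+1 \subset trace k).
have potentialS_t : [&& (k.+1 < d)%N, shared k.+1 == 2%N & full_from k.+1] -> t.
  case/and3P=> hk1 hL _; rewrite /t hk1.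
  by move: hL; rewrite /shared shared_traceS // card_es_setI_eq2.
have hL2 : (shared k <= 2)%N by rewrite -(card_es k) subset_leq_card ?subsetIl.
have hLn : (shared k <= #|trace k|)%N by rewrite subset_leq_card ?subsetIr.
have ht : t -> (2 <= #|trace k|)%N.
  by case/andP=> _ /subset_leq_card; rewrite card_es.
suff : (#|trace_edges k| + t)%:R <= (#|trace k|%:R - (shared k)%:R) * lam.
  rewrite natrD; case: (boolP [&& _, _ & _]) => [/potentialS_t -> | _] /=; first lra.
  by have : 0 <= (t : nat)%:R :> rat := ler0n _ _; lra.
have [hn1 | hn2] := leqP #|trace k| 1.
  have -> : trace_edges k = set0.
    apply/setP => e; rewrite in_set0; apply/negP => he.
    have := subset_leq_card (trace_edges_sub he).
    by rewrite edge_card2 //; [lia | move: he; rewrite !inE => /andP [/andP []]].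
  have -> : t = false by apply/negP => /ht; lia.
  have : (shared k)%:R <= #|trace k|%:R :> rat by rewrite ler_nat.
  by rewrite cards0 /=; nra.
have := nonfull_copy_card hk hfull hn2; rewrite -card_es_setI_eq2 -/(shared k) -/t !natrD.
case: eqP => [-> | /eqP hL]; first by rewrite /=; lra.
have : (shared k)%:R <= 1 :> rat by rewrite (ler_nat rat _ 1); lia.
by rewrite /=; nra.
Qed.

Lemma sum_trace_shared_le :
  \sum_(0 <= k < d) (#|trace k|%:R - (shared k)%:R) <= #|VF|%:R - (shared 0)%:R :> rat.
Proof.
pose A k := [set x | (copy k, x) \in VF].
have sum_A : (\sum_(0 <= k < d) #|A k| = #|VF|)%N.
  by rewrite big_mkord -(sum_card_fibers VF); apply: eq_bigr => i _; rewrite /A copy_ord.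
have trace0 : (#|trace 0| <= #|A 0|)%N.
  by apply: subset_leq_card; apply/subsetP => x; rewrite !inE rep_copy.
have traceS k : (1 <= k < d)%N -> (#|trace k| <= #|A k| + shared k)%N.
  case/andP=> hk1 hk; apply: leq_trans (leq_card_setU _ _); apply: subset_leq_card.
  apply/subsetP => x hx; rewrite in_setU in_setI hx andbT.
  case: (boolP (x \in es k)) => hxe; rewrite ?orbT // orbF inE -rep_copy ?hxe ?orbT //.
  by rewrite inE in hx.
rewrite -sum_A natr_sum (big_ltn d_gt0) (big_ltn d_gt0).
have : \sum_(1 <= k < d) (#|trace k|%:R - (shared k)%:R) <= \sum_(1 <= k < d) (#|A k|%:R : rat).
  by apply: ler_sum_nat => k /traceS; rewrite lerBlDr -natrD ler_nat.
have : (#|trace 0|%:R : rat) <= #|A 0|%:R by rewrite ler_nat.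
lra.
Qed.

Lemma card_EF_le : (#|EF| <= \sum_(0 <= k < d) #|trace_edges k|)%N.
Proof.
pose P := [set p : 'I_d * {set V} | p.2 \in trace_edges p.1].
have EF_sub : EF \subset (fun p : 'I_d * {set V} => copy_edge p.1 p.2) @: P.
  apply/subsetP => e he; have [_ [/subsetP /(_ e he) /imsetP [p hp e_eq] _]] := F_sub.
  move: hp; rewrite inE => /andP [hpE hpr].
  apply/imsetP; exists p; last by rewrite e_eq /copy_edge copy_ord.
  by rewrite !inE copy_ord hpE hpr /copy_edge copy_ord -e_eq.
apply: leq_trans (subset_leq_card EF_sub) (leq_trans (leq_imset_card _ _) _).
rewrite -(sum_card_fibers P) big_mkord; apply: eq_leq; apply: eq_bigr => i _.
by apply: eq_card => e; rewrite !inE.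
Qed.

Lemma full_from0_eq : full_from 0 -> (VF, EF) = (Hd_V d es, Hd_E E d es).
Proof.
rewrite /full_from big_all => /allP full_all.
have full_ord (i : 'I_d) : full_copy i by apply: full_all; rewrite mem_index_iota /=.
have [VF_sub [EF_sub _]] := F_sub; congr pair; apply/eqP; rewrite eqEsubset ?VF_sub ?EF_sub /=.
  apply/subsetP => _ /imsetP [q _ ->].
  have /andP [/eqP trace_full _] := full_ord q.1.
  have : q.2 \in trace q.1 by rewrite trace_full inE.
  by rewrite inE copy_ord.
apply/subsetP => _ /imsetP [p hp ->]; have /andP [_ /eqP edges_full] := full_ord p.1.
have : p.2 \in trace_edges p.1 by rewrite edges_full inE copy_ord; rewrite inE in hp.
by rewrite inE /copy_edge copy_ord => /andP [].
Qed.

Lemma shared0 : (forall x, x \in es 0 -> (Ordinal d_gt0, x) \in VF) -> shared 0 = 2%N.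
Proof.
move=> root_in; apply/eqP; rewrite card_es_setI_eq2; apply/subsetP => x hx.
rewrite inE rep_copy //; have -> : copy 0 = Ordinal d_gt0 by apply: val_inj; rewrite /= copy_val.
exact: root_in.
Qed.

End CopiesOfH.

Theorem lemma2p5 (V : finType) (E : {set {set V}})
  (Hsimple : simple_graph [set: V] E) (Hv : (4 <= #|V|)%N)
  (Hbal : balanced E)
  (es : nat -> {set V})
  (Hes : forall j, es j \in E)
  (Hdisj : forall j, [disjoint es j & es j.+1])
  (d : nat) (hd : (0 < d)%N)
  (VF : {set 'I_d * V}) (EF : {set {set 'I_d * V}})
  (HF : is_subgraph (Hd_V d es) (Hd_E E d es) VF EF)
  (Hproper : (VF, EF) <> (Hd_V d es, Hd_E E d es))
  (Hroot : forall x, x \in es 0%N -> (Ordinal hd, x) \in VF) :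
  #|EF|%:R <= (#|VF|%:R - 2) * lambdaH E.
Proof.
have edge_card2 e : e \in E -> #|e| = 2%N by move=> /Hsimple [].
have V_gt2 : (2 < #|V|)%N by lia.
have lam_ge0 : 0 <= lambdaH E by apply: le_trans (lambdaH_ge2 V_gt2 Hbal); lra.
pose c k := (potential E es hd VF EF k)%:R : rat.
have c0 : c 0%N = 0.
  rewrite /c /potential hd (shared0 edge_card2 Hes Hroot) eqxx /=.
  by case: (boolP (full_from _ _ _ _ _ _)) => // /(full_from0_eq HF).
have cd : c d = 0 by rewrite /c /potential ltnn.
have sum_edges := @ler_sum_telescope _ _ _ c d
  (trace_edges_le edge_card2 Hes Hdisj hd HF V_gt2 Hbal).
rewrite c0 cd subrr addr0 -mulr_suml in sum_edges.
have := ler_wpM2r lam_ge0 (sum_trace_shared_le es hd VF).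
rewrite (shared0 edge_card2 Hes Hroot).
have : #|EF|%:R <= \sum_(0 <= k < d) (#|trace_edges E es hd EF k|%:R : rat).
  by rewrite -natr_sum ler_nat; exact: (card_EF_le hd HF).
lra.
Qed.
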